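(* Let $K\ge2$, $a\ge0$ and $b>aK$. Let $\mathbf v=(-a+b,-b,0,\dots,0)'\in\mathbb{R}^K$ and $v(t)=t\mathbf v$, $t\ge0$. Then the solution of the Skorokhod problem for $v$ with respect to the matrix $\mathscr R$ satisfies $\Gamma_2(v)(t)=t\mathbf v_1$ for all $t\ge0$, where $\mathbf v_1=(b/K-a,0,\dots,0)'$.
   Context: $\mathscr R$ is the $K\times K$ matrix with $\mathscr R_{ii}=1$ for all $i$, $\mathscr R_{i,i+1}=-1/2$ for $i\le K-1$, $\mathscr R_{2,1}=-1$, $\mathscr R_{i,i-1}=-1/2$ for $3\le i\le K$, and all other entries $0$. For a right-continuous-with-left-limits path $x:[0,\infty)\to\mathbb{R}^K$ with $x(0)\ge0$, the Skorokhod problem for $x$ with respect to $\mathscr R$ has a unique solution $(\eta,y)$ of $\mathbb{R}_+^K$-valued paths such that $y(t)=x(t)+\mathscr R\eta(t)$ for all $t$, and for each $i$: $\eta_i(0)=0$, $\eta_i$ is nondecreasing, and $\int_0^\infty y_i(t)d\eta_i(t)=0$. Write $\Gamma(x)=(\Gamma_1(x),\Gamma_2(x))=(\eta,y)$. *)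

From HB Require Import structures.
From mathcomp Require Import all_boot all_order all_algebra.
From mathcomp Require Import all_classical all_reals all_analysis.
Set Implicit Arguments. Unset Strict Implicit. Unset Printing Implicit Defensive.
Import Order.TTheory GRing.Theory Num.Theory.
Import numFieldNormedType.Exports.
Local Open Scope classical_set_scope.
Local Open Scope ring_scope.

(* The K x K reflection matrix scR (0-indexed: paper index i is i.+1 here):
   diagonal 1; R_{i,i+1} = -1/2; R_{2,1} = -1; R_{i,i-1} = -1/2 for i >= 3. *)
Definition scR (R : realType) (K : nat) : 'M[R]_K :=
  \matrix_(i < K, j < K)
    if i == j then 1
    else if j.+1 == i :> nat then (if i == 1%N :> nat then -1 else -(1/2))
    else if i.+1 == j :> nat then -(1/2)
    else 0.

Definition rcll (R : realType) (p : R -> R) : Prop :=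
  (forall t : R, 0 <= t -> p x @[x --> t^'+] --> p t) /\
  (forall t : R, 0 < t -> cvg (p x @[x --> t^'-])).

(* A path [0,oo) -> R^K (represented on all of R, only t >= 0 matters) is rcll. *)
Definition rcll_path (R : realType) (K : nat) (p : R -> 'cV[R]_K) : Prop :=
  forall i : 'I_K, rcll (fun t => p t i 0).

(* Extension by 0 to negative times of the i-th coordinate of eta, used to
   define the Lebesgue-Stieltjes measure d eta_i on [0, oo). *)
Definition ext0 (R : realType) (K : nat) (eta : R -> 'cV[R]_K) (i : 'I_K) :
  R -> R := fun t => if t < 0 then 0 else eta t i 0.

Definition skorokhod_solution (R : realType) (K : nat) (M : 'M[R]_K)
    (x eta y : R -> 'cV[R]_K) : Prop :=
  rcll_path eta /\ rcll_path y /\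
  (forall t, 0 <= t -> forall i, 0 <= eta t i 0 /\ 0 <= y t i 0) /\
  (forall t, 0 <= t -> y t = x t + M *m eta t) /\
  (forall i, eta 0 i 0 = 0) /\
  (forall i s t, 0 <= s -> s <= t -> eta s i 0 <= eta t i 0) /\
  (forall i, exists f : cumulative R R, (f : R -> R) = ext0 eta i /\
     (\int[lebesgue_stieltjes_measure f]_(t in [set t : R | (0 <= t)%R]) (y t i 0)%:E = 0)%E).

From HB Require Import structures.
From mathcomp Require Import all_boot all_order all_algebra.
From mathcomp Require Import all_classical all_reals all_analysis.
From mathcomp Require Import ring lra.
Set Implicit Arguments. Unset Strict Implicit. Unset Printing Implicit Defensive.
Import Order.TTheory GRing.Theory Num.Theory.
Import numFieldNormedType.Exports.
Local Open Scope classical_set_scope.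
Local Open Scope ring_scope.

(* Existence: with e_0 = 0 and e_j = 2b(1 - j/K) for j >= 1 (indices from 0),
   one has v1 = v + scR e, and e, v1 >= 0 are complementary (e_0 = 0, and
   v1_j = 0 for j >= 1), so eta(t) = t e, y(t) = t v1 is a solution.
   Uniqueness holds for every M such that P = I - M is entrywise nonnegative
   and P W <= rho W for some W > 0 and rho < 1.  For two solutions,
   eta - y = P eta - x, hence eta - y = eta' - y' + P (eta - eta').  As eta_j
   only increases while y_j = 0, a bound eta - eta' <= c W on [0, t] improves
   to eta - eta' <= rho c W; the least such c is therefore 0, so eta <= eta',
   and by symmetry eta = eta'.  For scR, W_0 = K^2 + 1/2 and W_j = 2K^2 - j^2
   satisfy scR W >= 1/2, whence P W <= (1 - 1/(4K^2)) W. *)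

Section IntegralBounds.
Context d (T : measurableType d) (R : realType) (mu : {measure set T -> \bar R}).
Import HBNNSimple.
Local Open Scope ereal_scope.

Lemma mul_measure_le_integral (D I : set T) (z : T -> R) (c : R) :
  measurable I -> (0 <= c)%R -> I `<=` D ->
  (forall x, D x -> 0 <= z x)%R -> (forall x, I x -> c <= z x)%R ->
  c%:E * mu I <= \int[mu]_(x in D) (z x)%:E.
Proof.
move=> mI c_ge0 ID z_ge0 z_ge_c.
rewrite integral_mkcond ge0_integralTE; last first.
  by move=> x; rewrite /patch; case: ifP => // /set_mem Dx; rewrite lee_fin z_ge0.
apply: ereal_sup_ubound; exists (scale_nnsfun (indic_nnsfun R mI) c_ge0).
  move=> x /=; rewrite /patch /measurable_realfun.mindic indicE.
  case: (boolP (x \in I)) => [/set_mem Ix | _].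
    rewrite mem_set; last exact: ID.
    by rewrite mulr_natr mulr1n lee_fin z_ge_c.
  by rewrite mulr0; case: ifP => // /set_mem Dx; rewrite lee_fin z_ge0.
by rewrite sintegralrM sintegral_indic.
Qed.

Lemma integral_null_measure (D : set T) (f : T -> \bar R) :
  (forall A, measurable A -> mu A = 0) -> (forall x, D x -> 0 <= f x) ->
  \int[mu]_(x in D) f x = 0.
Proof.
move=> mu0 f_ge0; apply/eqP; rewrite eq_le integral_ge0 // andbT.
rewrite integral_mkcond ge0_integralTE; last first.
  by move=> x; rewrite /patch; case: ifP => // /set_mem; exact: f_ge0.
apply: ge_ereal_sup => _ [h _ <-].
rewrite sintegralE fsbig1 // => r _.
by rewrite mu0 ?mule0 //; exact: measurable_funPTI.
Qed.

End IntegralBounds.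

Section LebesgueStieltjes.
Variable R : realType.
Local Notation mu f := (lebesgue_stieltjes_measure f).

Lemma lebesgue_stieltjes_itvoc (f : cumulative R R) (u v : R) : u <= v ->
  mu f `]u, v] = (f v - f u)%:E.
Proof.
move=> uv; rewrite /lebesgue_stieltjes_measure /measure_extension /=.
by rewrite measurable_mu_extE /= ?wlength_itv_bnd //; exact: is_ocitv.
Qed.

Lemma lebesgue_stieltjes_itvcc_ge (f : cumulative R R) (u v c : R) : u <= v ->
  (forall s, s < u -> f s <= c) -> ((f v - c)%:E <= mu f `[u, v])%E.
Proof.
move=> uv f_le_c.
pose F n := `]u - n.+1%:R^-1, v]%classic : set R.
have F_le n : u - n.+1%:R^-1 <= v.
  by apply: le_trans uv; rewrite lerBlDr lerDl invr_ge0.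
have muF n : mu f (F n) = (f v - f (u - n.+1%:R^-1))%:E.
  exact: lebesgue_stieltjes_itvoc.
have bigcapF : \bigcap_n F n = `[u, v]%classic.
  apply/seteqP; split => x /=; last first.
    rewrite in_itv /= => /andP[ux xv] n _; rewrite /F /= in_itv /= xv andbT.
    by apply: lt_le_trans ux; rewrite ltrBlDr ltrDl invr_gt0.
  move=> Fx; rewrite in_itv /=.
  have := Fx 0%N I; rewrite /F /= in_itv /= => /andP[_ ->]; rewrite andbT.
  rewrite leNgt; apply/negP => xu.
  have [n n_lt] : exists n, n.+1%:R^-1 < u - x.
    exists (Num.truncn (u - x)^-1).
    by rewrite -ltf_pV2 ?(posrE, subr_gt0) // invrK truncnS_gt.
  have := Fx n I; rewrite /F /= in_itv /= => /andP[+ _].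
  by move: n_lt; set q := n.+1%:R^-1; lra.
have cvF : (mu f \o F) n @[n --> \oo] --> mu f `[u, v]%classic.
  rewrite -bigcapF; apply: nonincreasing_cvg_mu => //.
  - by rewrite /= muF ltry.
  - by move=> n; exact: measurable_itv.
  - by rewrite bigcapF; exact: measurable_itv.
  - move=> n m nm; apply/subsetPset => x /=; rewrite /F /= !in_itv /= => /andP[+ ->].
    by rewrite andbT; apply: le_lt_trans; rewrite lerB // lef_pV2 ?posrE // ler_nat.
rewrite -(cvg_lim _ cvF) //; apply: lime_ge; first by apply/cvg_ex; exists (mu f `[u, v]%classic).
apply: nearW => n /=; rewrite muF lee_fin lerB // f_le_c //.
by rewrite ltrBlDr ltrDl invr_gt0.
Qed.

Lemma cumulative_le_of_integral_eq0 (f : cumulative R R) (z : R -> R) (t B : R) :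
  0 <= t -> f 0 <= B -> (forall s, 0 <= s -> 0 <= z s) ->
  (forall s, 0 <= s -> s <= t -> f s <= B + z s) ->
  (\int[mu f]_(s in [set s : R | (0 <= s)%R]) (z s)%:E = 0)%E ->
  f t <= B.
Proof.
(* If f t = B + 2e with e > 0, then after tau = sup {s <= t | f s <= B + e}
   one has z >= f - B >= e on an interval of mu f-mass at least e. *)
move=> t_ge0 f0_le z_ge0 f_le int_z0; rewrite leNgt; apply/negP => B_lt.
have f_nd := cumulative_is_nondecreasing f.
pose e := (f t - B) / 2.
have e_gt0 : 0 < e by rewrite /e; lra.
have ft : f t = B + 2 * e by rewrite /e; lra.
clearbody e.
pose A := [set s | s <= t /\ f s <= B + e].
have A_sup : has_sup A by split; [exists 0; split => //; lra | exists t => s []].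
pose tau := sup A.
have tau_ge0 : 0 <= tau by apply: sup_upper_bound => //; split => //; lra.
have tau_le : tau <= t by apply: ge_sup => [|s []//]; exists 0; split => //; lra.
have f_gt s : tau < s -> s <= t -> B + e < f s.
  move=> taus st; rewrite ltNge; apply/negP => fs.
  by have := sup_upper_bound A_sup (conj st fs); rewrite -/tau; lra.
have f_le_before s : s < tau -> f s <= B + e.
  move=> stau; have [x [xt fx] /ltW sx] := sup_adherent (ltac:(lra) : 0 < tau - s) A_sup.
  by apply: le_trans fx; apply: f_nd; rewrite -/tau in sx; lra.
suff [I [mI [I_pos [z_ge_e muI]]]] : exists I : set R, measurable I /\
    I `<=` [set s | 0 <= s] /\ (forall s, I s -> e <= z s) /\ (e%:E <= mu f I)%E.
  have := mul_measure_le_integral (mu f) mI (ltW e_gt0) I_pos z_ge0 z_ge_e.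
  rewrite int_z0 => muI_le0.
  have : (e%:E * e%:E <= 0)%E.
    by apply: le_trans muI_le0; apply: lee_pmul; rewrite // lee_fin ltW.
  by rewrite -EFinM lee_fin; nra.
have [ftau | ftau] := leP (f tau) (B + e).
  exists `]tau, t]%classic; split; first exact: measurable_itv.
  split; first by move=> s /=; rewrite in_itv /= => /andP[ts _]; lra.
  split; last by rewrite lebesgue_stieltjes_itvoc // lee_fin; lra.
  move=> s /=; rewrite in_itv /= => /andP[ts st].
  by have := f_gt s ts st; have := f_le s (ltac:(lra)) st; lra.
exists `[tau, t]%classic; split; first exact: measurable_itv.
split; first by move=> s /=; rewrite in_itv /= => /andP[ts _]; lra.
split; last by apply: le_trans (lebesgue_stieltjes_itvcc_ge tau_le f_le_before); rewrite lee_fin; lra.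
move=> s /=; rewrite in_itv /= => /andP[ts st].
by have := f_nd _ _ ts; have := f_le s (ltac:(lra)) st; lra.
Qed.

End LebesgueStieltjes.

Section LinearSolution.
Variable R : realType.

Lemma continuous_rcll (p : R -> R) : continuous p -> rcll p.
Proof.
move=> p_cont; split => t _; first exact: cvg_at_right_filter (p_cont t).
by apply/cvg_ex; exists (p t); exact: cvg_at_left_filter (p_cont t).
Qed.

Lemma rcll_path_scale (K : nat) (v : 'cV[R]_K) : rcll_path (fun t => t *: v).
Proof.
move=> i; apply: continuous_rcll => t.
rewrite (_ : (fun s => _) = fun s => s * v i 0); last by apply/funext => s; rewrite mxE.
exact: mulrr_continuous.
Qed.

(* Clamping c at 0 makes [ramp c] cumulative for every c. *)
Definition ramp (c s : R) : R := Num.max 0 s * Num.max 0 c.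

Lemma ramp_nondecreasing (c : R) : nondecreasing (ramp c).
Proof.
move=> x y xy; apply: ler_wpM2r; first by rewrite le_max lexx.
by rewrite ge_max !le_max lexx xy orbT.
Qed.

Lemma ramp_right_continuous (c : R) : right_continuous (ramp c).
Proof.
move=> x; apply: cvg_at_right_filter; apply: cvgM; last exact: cvg_cst.
exact: (max_fun_continuous (fun _ => cvg_cst _) (fun _ => cvg_id)).
Qed.

HB.instance Definition _ (c : R) :=
  isCumulative.Build R _ R (ramp c) (@ramp_nondecreasing c) (@ramp_right_continuous c).

Lemma ramp0 (s : R) : ramp 0 s = 0.
Proof. by rewrite /ramp maxxx mulr0. Qed.

Lemma lebesgue_stieltjes_ramp0 (A : set R) : measurable A ->
  lebesgue_stieltjes_measure (ramp 0) A = 0%E.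
Proof.
move=> mA; pose F n := `](- n%:R), n%:R]%classic : set R.
have bigcupF : \bigcup_n F n = setT.
  apply/seteqP; split => // x _; exists (Num.truncn `|x|).+1 => //.
  rewrite /F /= in_itv /=; have := truncnS_gt `|x|.
  have : - `|x| <= x <= `|x| by rewrite -ler_norml.
  move=> /andP[? ?] ?; apply/andP; split; lra.
have muF n : lebesgue_stieltjes_measure (ramp 0) (F n) = 0%E.
  rewrite lebesgue_stieltjes_itvoc /= ?ramp0 ?subrr //.
  by have : (0 : R) <= n%:R by []; lra.
have cvF : (lebesgue_stieltjes_measure (ramp 0) \o F) n @[n --> \oo] -->
    lebesgue_stieltjes_measure (ramp 0) setT.
  rewrite -bigcupF; apply: nondecreasing_cvg_mu => //.
  - by move=> n; exact: measurable_itv.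
  - by rewrite bigcupF; exact: measurableT.
  - move=> n m nm; apply/subsetPset => x /=; rewrite /F /= !in_itv /= => /andP[? ?].
    have : (n%:R : R) <= m%:R by rewrite ler_nat.
    move=> ?; apply/andP; split; lra.
have muT : lebesgue_stieltjes_measure (ramp 0) setT = 0%E.
  have F0 : lebesgue_stieltjes_measure (ramp 0) \o F = cst 0%E by apply/funext => n; exact: muF.
  by rewrite F0 in cvF; apply/esym; exact: cvg_unique (cvg_cst _) cvF.
by apply/eqP; rewrite eq_le measure_ge0 andbT -muT le_measure // inE.
Qed.

Lemma linear_skorokhod_solution (K : nat) (M : 'M[R]_K) (v v1 e : 'cV[R]_K) :
  (forall i, 0 <= e i 0) -> (forall i, 0 <= v1 i 0) ->
  (forall i, e i 0 = 0 \/ v1 i 0 = 0) -> v1 = v + M *m e ->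
  skorokhod_solution M (fun t => t *: v) (fun t => t *: e) (fun t => t *: v1).
Proof.
move=> e_ge0 v1_ge0 compl v1E.
split; first exact: rcll_path_scale.
split; first exact: rcll_path_scale.
split; first by move=> t t_ge0 i; rewrite !mxE; split; exact: mulr_ge0.
split; first by move=> t _; rewrite v1E scalerDr scalemxAr.
split; first by move=> i; rewrite scale0r mxE.
split; first by move=> i s t _ st; rewrite !mxE ler_wpM2r.
move=> i; exists (ramp (e i 0)); split.
  apply/funext => s; rewrite /ext0 mxE /= /ramp /= (max_idPr (e_ge0 i)).
  by case: ltP => // _; rewrite mul0r.
have [e0 | v10] := compl i; last by apply: integral0_eq => s _; rewrite mxE v10 mulr0.
rewrite e0; apply: integral_null_measure; first exact: lebesgue_stieltjes_ramp0.
by move=> s s_ge0; rewrite lee_fin mxE mulr_ge0.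
Qed.

End LinearSolution.

Section Contraction.
Variable R : realType.

Lemma le0_of_contracting_bound (I : Type) (A : set I) (x w : I -> R) (rho : R) :
  (forall i, A i -> 0 < w i) -> 0 <= rho -> rho < 1 ->
  (exists M0, 0 <= M0 /\ forall i, A i -> x i <= M0 * w i) ->
  (forall M, 0 <= M -> (forall i, A i -> x i <= M * w i) ->
     forall i, A i -> x i <= rho * M * w i) ->
  forall i, A i -> x i <= 0.
Proof.
move=> w_gt0 rho_ge0 rho_lt1 [M0 [M0_ge0 x_le_M0]] step.
pose S := [set M | 0 <= M /\ forall i, A i -> x i <= M * w i].
have S_lb : has_lbound S by exists 0 => M [].
have S_M0 : S M0 by [].
pose m := inf S.
have m_ge0 : 0 <= m by apply: lb_le_inf; [exists M0 | move=> M []].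
have x_le_m : forall i, A i -> x i <= m * w i.
  move=> i Ai; rewrite -ler_pdivrMr ?w_gt0 //.
  apply: lb_le_inf; first by exists M0.
  by move=> M [_ x_le_M]; rewrite ler_pdivrMr ?w_gt0 ?x_le_M.
have : m <= rho * m by apply: ge_inf => //; split; [exact: mulr_ge0 | exact: step].
move=> m_le i Ai; have m0 : m = 0 by nra.
by have := x_le_m i Ai; rewrite m0 mul0r.
Qed.

Lemma ler_mulmx_nonneg (m n : nat) (A : 'M[R]_(m, n)) (u v : 'cV[R]_n) :
  (forall i j, 0 <= A i j) -> (forall j, u j 0 <= v j 0) ->
  forall i, (A *m u) i 0 <= (A *m v) i 0.
Proof. by move=> A_ge0 uv i; rewrite !mxE; apply: ler_sum => j _; rewrite ler_wpM2l. Qed.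

End Contraction.

Section SkorokhodUniqueness.
Variables (R : realType) (K : nat) (M : 'M[R]_K) (W : 'cV[R]_K) (rho : R).
Local Notation P := (1%:M - M).
Hypothesis P_ge0 : forall i j, 0 <= P i j.
Hypothesis W_gt0 : forall i, 0 < W i 0.
Hypothesis rho_ge0 : 0 <= rho.
Hypothesis rho_lt1 : rho < 1.
Hypothesis PW_le : forall i, (P *m W) i 0 <= rho * W i 0.

Variables (x eta y eta' y' : R -> 'cV[R]_K).
Hypothesis sol : skorokhod_solution M x eta y.
Hypothesis sol' : skorokhod_solution M x eta' y'.

Lemma skorokhod_regulator_sub_state (s : R) : 0 <= s ->
  eta s - y s = eta' s - y' s + P *m (eta s - eta' s).
Proof.
have [_ [_ [_ [yE _]]]] := sol; have [_ [_ [_ [y'E _]]]] := sol'.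
move=> s_ge0; rewrite yE ?y'E // mulmxBl mul1mx mulmxBr.
move: (M *m eta s) (M *m eta' s) => Meta Meta'.
by apply/matrixP => i j; rewrite !mxE; ring.
Qed.

Lemma skorokhod_regulator_gap_contracts (t Mb : R) : 0 <= Mb ->
  (forall j s, 0 <= s <= t -> eta s j 0 - eta' s j 0 <= Mb * W j 0) ->
  forall j s, 0 <= s <= t -> eta s j 0 - eta' s j 0 <= rho * Mb * W j 0.
Proof.
have [_ [_ [sol_ge0 [_ [eta0 [_ eta_int]]]]]] := sol.
have [_ [_ [sol'_ge0 [_ [_ [eta'_nd _]]]]]] := sol'.
move=> Mb_ge0 gap_le j s /andP[s_ge0 st].
have PW_ge0 : 0 <= (P *m W) j 0.
  by rewrite mxE sumr_ge0 // => k _; rewrite mulr_ge0 // ltW.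
suff : eta s j 0 <= eta' s j 0 + Mb * (P *m W) j 0.
  by have := ler_wpM2l Mb_ge0 (PW_le j); rewrite mulrCA mulrA => *; lra.
have [f [fE f_int]] := eta_int j.
have fE_ge0 r : 0 <= r -> f r = eta r j 0 by move=> r_ge0; rewrite fE /ext0 ltNge r_ge0.
rewrite -fE_ge0 //; apply: (cumulative_le_of_integral_eq0 s_ge0 _ _ _ f_int).
- rewrite fE /ext0 ltxx eta0; apply: addr_ge0; first by have [] := sol'_ge0 s s_ge0 j.
  exact: mulr_ge0.
- by move=> r r_ge0; have [] := sol_ge0 r r_ge0 j.
move=> r r_ge0 rs; rewrite fE_ge0 //.
have gap : eta r j 0 - y r j 0 = eta' r j 0 - y' r j 0 + (P *m (eta r - eta' r)) j 0.
  by have := congr1 (fun v : 'cV[R]_K => v j 0) (skorokhod_regulator_sub_state r_ge0); rewrite !mxE.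
have PD_le : (P *m (eta r - eta' r)) j 0 <= Mb * (P *m W) j 0.
  rewrite (_ : _ * _ = (P *m (Mb *: W)) j 0); last by rewrite -scalemxAr [RHS]mxE.
  apply: ler_mulmx_nonneg => // k.
  by rewrite !mxE; apply: gap_le; rewrite r_ge0 (le_trans rs).
have [_ y'_ge0] := sol'_ge0 r r_ge0 j.
have := eta'_nd j r s r_ge0 rs; lra.
Qed.

Lemma skorokhod_regulator_le (t : R) (i : 'I_K) : 0 <= t -> eta t i 0 <= eta' t i 0.
Proof.
have [_ [_ [sol_ge0 [_ [_ [eta_nd _]]]]]] := sol; have [_ [_ [sol'_ge0 _]]] := sol'.
move=> t_ge0; rewrite -subr_le0.
have eta_t_ge0 k : 0 <= eta t k 0 / W k 0.
  by apply: divr_ge0; [have [] := sol_ge0 t t_ge0 k | exact: ltW].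
apply: (@le0_of_contracting_bound _ _ [set p : 'I_K * R | 0 <= p.2 <= t]
  (fun p => eta p.2 p.1 0 - eta' p.2 p.1 0) (fun p => W p.1 0) rho _ rho_ge0 rho_lt1 _ _ (i, t)).
- by move=> p _; exact: W_gt0.
- exists (\sum_k eta t k 0 / W k 0); split; first exact: sumr_ge0.
  move=> [j s] /andP[/= s_ge0 st].
  have eta_t_le : eta t j 0 / W j 0 <= \sum_k eta t k 0 / W k 0.
    by rewrite (bigD1 j) //= lerDl sumr_ge0.
  have [eta'_ge0 _] := sol'_ge0 s s_ge0 j.
  have := eta_nd j s t s_ge0 st.
  have := ler_wpM2r (ltW (W_gt0 j)) eta_t_le; rewrite divfK ?gt_eqF //; lra.
- move=> Mb Mb_ge0 gap_le [j s] Ajs.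
  by apply: (skorokhod_regulator_gap_contracts (t := t)) => // k r Akr; exact: (gap_le (k, r)).
- by rewrite /= t_ge0 lexx.
Qed.

End SkorokhodUniqueness.

Lemma skorokhod_solution_unique (R : realType) (K : nat) (M : 'M[R]_K)
    (W : 'cV[R]_K) (rho : R) (x eta y eta' y' : R -> 'cV[R]_K) :
  (forall i j, 0 <= (1%:M - M) i j) -> (forall i, 0 < W i 0) -> 0 <= rho -> rho < 1 ->
  (forall i, ((1%:M - M) *m W) i 0 <= rho * W i 0) ->
  skorokhod_solution M x eta y -> skorokhod_solution M x eta' y' ->
  forall t, 0 <= t -> y t = y' t.
Proof.
move=> P_ge0 W_gt0 rho_ge0 rho_lt1 PW_le sol sol' t t_ge0.
have [_ [_ [_ [yE _]]]] := sol; have [_ [_ [_ [y'E _]]]] := sol'.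
have eta_eq : eta t = eta' t.
  have eta_le := skorokhod_regulator_le P_ge0 W_gt0 rho_ge0 rho_lt1 PW_le.
  apply/matrixP => i j; rewrite (ord1 j); apply/eqP; rewrite eq_le.
  by rewrite (eta_le _ _ _ _ _ sol sol') ?(eta_le _ _ _ _ _ sol' sol).
by rewrite yE // y'E // eta_eq.
Qed.

Section ReflectionMatrix.
Variables (R : realType) (K : nat).

(* The sub-diagonal entry scR_{i,i-1}, set to 0 in row 0 (which has none) so
   that [scR_mul_col] needs no case split. *)
Definition scR_sub (i : nat) : R :=
  if i == 0%N then 0 else if i == 1%N then -1 else -(1/2).

Lemma scR_mul_entry (i j : 'I_K) (g : nat -> R) :
  scR R K i j * g j =
  (if (j : nat) == i then g j else 0) +
  (if (j : nat) == i.-1 then scR_sub i * g j else 0) +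
  (if (j : nat) == i.+1 then -(1/2) * g j else 0).
Proof.
rewrite /scR /scR_sub mxE -val_eqE /=.
case: (ltngtP i j) => [ij|ji|/val_inj ->].
- rewrite (gtn_eqF (leqW ij)) (gtn_eqF (leq_ltn_trans (leq_pred _) ij)) !add0r.
  by rewrite [(j : nat) == _]eq_sym; case: eqP; rewrite ?mul0r.
- rewrite (ltn_eqF (ltn_trans ji (ltnSn i))) addr0 add0r.
  have i_gt0 : (0 < i)%N by apply: leq_ltn_trans ji.
  rewrite (gtn_eqF i_gt0) -[(j : nat) == i.-1](inj_eq succn_inj) prednK //.
  by rewrite (gtn_eqF (ltn_trans ji (ltnSn i))); case: eqP => // _; rewrite mul0r.
- rewrite (ltn_eqF (ltnSn j)) addr0.
  case: j => [[|n] _] /=; first by rewrite mul0r addr0 mul1r.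
  by rewrite (gtn_eqF (ltnSn n)) addr0 mul1r.
Qed.

Lemma scR_mul_col (g : nat -> R) (i : 'I_K) :
  (scR R K *m \col_(j < K) g j) i 0 =
  g i + scR_sub i * g i.-1 + (if (i.+1 < K)%N then -(1/2) * g i.+1 else 0).
Proof.
rewrite mxE; under eq_bigr do rewrite [X in _ * X]mxE (scR_mul_entry _ _ g).
rewrite !big_split /= -!big_mkcond /= big_ord1_eq ltn_ord.
rewrite (big_ord1_eq _ (fun j => scR_sub i * g j)) (big_ord1_eq _ (fun j => -(1/2) * g j)).
by rewrite (leq_ltn_trans (leq_pred _) (ltn_ord i)).
Qed.

Lemma I_sub_scR_ge0 (i j : 'I_K) : 0 <= (1%:M - scR R K) i j.
Proof.
rewrite /scR !mxE; case: eqP => _ /=; first lra.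
by case: ifP => _; [case: ifP => _ | case: ifP => _]; lra.
Qed.

End ReflectionMatrix.

Section DriftAndWeight.
Variables (R : realType) (K : nat).
Hypothesis K_ge2 : (2 <= K)%N.

Definition regulator_slope (b : R) (j : nat) : R :=
  if j == 0%N then 0 else 2 * b * (1 - j%:R / K%:R).

Lemma regulator_slope_ge0 (b : R) (j : 'I_K) : 0 <= b -> 0 <= regulator_slope b j.
Proof.
move=> b_ge0; rewrite /regulator_slope; case: eqP => // _.
rewrite mulr_ge0 ?mulr_ge0 // subr_ge0 ler_pdivrMr ?mul1r ?ler_nat 1?ltnW //.
by rewrite ltr0n; apply: leq_trans K_ge2.
Qed.

Lemma scR_regulator_slope (a b : R) :
  \col_(i < K) (if i == 0%N :> nat then b / K%:R - a else 0) =
  \col_(i < K) (if i == 0%N :> nat then b - a else if i == 1%N :> nat then - b else 0)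
  + scR R K *m \col_(j < K) regulator_slope b j.
Proof.
have K_neq0 : K != 0%N by rewrite -lt0n; apply: leq_trans K_ge2.
apply/matrixP => -[[|[|i]] Hi] j.
all: rewrite (ord1 j) [RHS]mxE scR_mul_col !mxE /regulator_slope /scR_sub /=.
- by rewrite ifT //; field; rewrite pnatr_eq0; exact: K_neq0.
- case: (ltnP 2 K) => K3; first by field; rewrite pnatr_eq0; exact: K_neq0.
  have -> : K = 2%N by apply/eqP; rewrite eqn_leq K_ge2 K3.
  by field.
- rewrite -!natr1; case: (ltnP i.+3 K) => K3; first by field; rewrite pnatr_eq0; exact: K_neq0.
  have -> : K = i.+3 by apply/eqP; rewrite eqn_leq K3 Hi.
  by field; rewrite -natrD pnatr_eq0.
Qed.

Definition contraction_weight (j : nat) : R :=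
  if j == 0%N then K%:R ^+ 2 + 1/2 else 2 * K%:R ^+ 2 - j%:R ^+ 2.

Local Notation W := (\col_(j < K) contraction_weight j).

Lemma contraction_weight_bounds (i : 'I_K) : 1 <= W i 0 <= 2 * K%:R ^+ 2.
Proof.
rewrite mxE.
have K_ge1 : 1 <= K%:R :> R by rewrite ler1n; apply: leq_trans K_ge2.
case: i => [[|i] Hi]; rewrite /contraction_weight /=; first by apply/andP; split; nra.
have : (i.+1%:R : R) + 1 <= K%:R by rewrite natr1 ler_nat.
have : 0 <= i%:R :> R by [].
by rewrite -natr1 => *; apply/andP; split; nra.
Qed.

Lemma scR_mul_contraction_weight (i : 'I_K) :
  1/2 <= (scR R K *m W) i 0.
Proof.
case: i => [[|[|i]] Hi]; rewrite scR_mul_col /contraction_weight /scR_sub /=.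
- by rewrite ifT // !expr2; nra.
- case: (ltnP 2 K) => K3; first by rewrite !expr2; lra.
  have -> : K = 2%N by apply/eqP; rewrite eqn_leq K_ge2 K3.
  by rewrite !expr2; lra.
- rewrite -[i.+3]addn3 -[i.+2]addn2 -[i.+1]addn1 !natrD !expr2.
  case: (ltnP (i + 3) K) => K3; first lra.
  have -> : K = (i + 3)%N by apply/eqP; rewrite eqn_leq K3 addn3.
  have : 0 <= i%:R :> R by [].
  rewrite natrD; nra.
Qed.

Lemma scR_contraction (i : 'I_K) :
  ((1%:M - scR R K) *m W) i 0 <= (1 - (4 * K%:R ^+ 2)^-1) * W i 0.
Proof.
have K2_gt0 : 0 < K%:R ^+ 2 :> R by rewrite exprn_gt0 // ltr0n; apply: leq_trans K_ge2.
have /andP[_ W_le] := contraction_weight_bounds i.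
have W_half := scR_mul_contraction_weight i.
have -> : ((1%:M - scR R K) *m W) i 0 = W i 0 - (scR R K *m W) i 0.
  by rewrite mulmxBl mul1mx !mxE.
rewrite mulrBl mul1r.
suff : (4 * K%:R ^+ 2)^-1 * W i 0 <= 1/2 by lra.
apply: le_trans (ler_wpM2l _ W_le) _; first by rewrite invr_ge0 mulr_ge0 // ltW.
by rewrite invfM mulrACA mulVf ?lt0r_neq0 // mulr1; lra.
Qed.

End DriftAndWeight.

Theorem lemma7p1 (R : realType) (K : nat) (a b : R) :
  (2 <= K)%N -> 0 <= a -> a * K%:R < b ->
  let vv : 'cV[R]_K :=
    \col_(i < K) (if i == 0%N :> nat then b - a
                  else if i == 1%N :> nat then - b else 0) in
  let vv1 : 'cV[R]_K :=
    \col_(i < K) (if i == 0%N :> nat then b / K%:R - a else 0) in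
  (exists eta y : R -> 'cV[R]_K,
      skorokhod_solution (scR R K) (fun t => t *: vv) eta y) /\
  (forall eta y : R -> 'cV[R]_K,
      skorokhod_solution (scR R K) (fun t => t *: vv) eta y ->
      forall t : R, 0 <= t -> y t = t *: vv1).
Proof.
move=> K_ge2 a_ge0 aK_lt_b vv vv1.
have K_ge1 : 1 <= K%:R :> R by rewrite ler1n; apply: leq_trans K_ge2.
have K_gt0 : 0 < K%:R :> R by lra.
have b_ge0 : 0 <= b by have := mulr_ge0 a_ge0 (ltW K_gt0); lra.
have vv1_ge0 i : 0 <= vv1 i 0.
  by rewrite mxE; case: eqP => // _; rewrite subr_ge0 ler_pdivlMr ?ltW.
have sol : skorokhod_solution (scR R K) (fun t => t *: vv)
    (fun t => t *: \col_(j < K) regulator_slope K b j) (fun t => t *: vv1).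
  apply: linear_skorokhod_solution (scR_regulator_slope K_ge2 a b) => i.
  - by rewrite mxE regulator_slope_ge0.
  - exact: vv1_ge0.
  - by rewrite mxE /regulator_slope; case: eqP => i0; [left | right; rewrite mxE; case: eqP].
split; first by do 2 eexists; exact: sol.
move=> eta y sol' t t_ge0.
have K2_gt0 : 0 < 4 * K%:R ^+ 2 :> R by rewrite mulr_gt0 ?exprn_gt0.
apply: (skorokhod_solution_unique (@I_sub_scR_ge0 R K) _ _ _
  (scR_contraction R K_ge2) sol' sol t_ge0).
- by move=> i; have /andP[+ _] := contraction_weight_bounds R K_ge2 i; lra.
- by rewrite subr_ge0 invf_le1 //; nra.
- by rewrite ltrBlDr ltrDl invr_gt0.
Qed.
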